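(* For integers $N\ge 2$ and $n\ge 1$, $$B_{N,n}=\frac{N}{N+n}\left\{\sum_{m=0}^{n-1}\ \sum_{1\le i_m<\cdots<i_1<i_0=n}B_{N-1,i_m}\prod_{k=1}^{m}B_{N-1,\,i_{k-1}-i_k+1}\binom{i_{k-1}}{i_{k-1}-i_k+1}\frac{N}{N+i_k}\right\},$$ where for each $m$ the inner sum runs over all integers $i_1,\dots,i_m$ with $1\le i_m<\cdots<i_1<i_0=n$ (for $m=0$ the inner sum consists of the single term $B_{N-1,n}$, the empty product being $1$).
   Context: For a positive integer $N$, the hypergeometric Bernoulli numbers $B_{N,n}$ ($n\ge 0$) are defined by $$\frac{x^N/N!}{e^x-\sum_{n=0}^{N-1}x^n/n!}=\sum_{n=0}^\infty B_{N,n}\frac{x^n}{n!}.$$ *)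

From mathcomp Require Import all_boot all_order all_algebra.
Set Implicit Arguments. Unset Strict Implicit. Unset Printing Implicit Defensive.
Import Order.TTheory GRing.Theory Num.Theory.
Local Open Scope ring_scope.

(* [hypB_gf N b] says that  sum_n b n x^n/n!  is the formal power series
     (x^N/N!) / (e^x - sum_{j<N} x^j/j!).
   Since  e^x - sum_{j<N} x^j/j! = sum_{j>=N} x^j/j!  (a series of valuation N),
   this quotient is the unique series F with  F * (sum_{j>=N} x^j/j!) = x^N/N!;
   we state this identity coefficientwise: the coefficient of x^m in the
   product is  sum_{k+j=m, j>=N} (b k / k!) (1 / j!),  and it must equal
   [m = N] / N!. *)
Definition hypB_gf (N : nat) (b : nat -> rat) : Prop :=
  forall m : nat,
    \sum_(k < m.+1 | (N <= m - k)%N) (b k / (k`!)%:R) * ((m - k)`!)%:R^-1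
    = (m == N)%:R / (N`!)%:R.

(* Let F_N = sum_n B_{N,n} x^n/n! and E_N = e^x - sum_{j<N} x^j/j!, so that
   F_N E_N = x^N/N!.  Since E_{N+1}' = E_N = E_{N+1} + x^N/N! = E_{N+1} + F_N E_N,
   differentiating F_{N+1} E_{N+1} = x^{N+1}/(N+1)! and cancelling E_N (whose
   valuation is N) gives the differential equation
     F_{N+1} + F_{N+1}' = (1 + F_{N+1}') F_N.
   Comparing coefficients of x^n, with B_{N,0} = 1 and B_{N,1} = -1/(N+1), yields
   the triangular recurrence
     (N+1+n)/(N+1) B_{N+1,n} = B_{N,n} + sum_{0<i<n} B_{N,n-i+1} C(n,n-i+1) B_{N+1,i},
   and unfolding it along decreasing chains n = i_0 > i_1 > ... > i_m > 0 gives
   the formula.  Power series are represented by polynomials truncated at a high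
   enough degree, an identity mod x^M being divisibility by 'X^M. *)

From mathcomp Require Import all_boot all_order all_algebra.
From mathcomp Require Import ring zify.
Set Implicit Arguments. Unset Strict Implicit. Unset Printing Implicit Defensive.
Import Order.TTheory GRing.Theory Num.Theory.
Local Open Scope ring_scope.

Section TruncatedSeries.
Variable R : fieldType.
Implicit Types p q : {poly R}.

Lemma take_poly_eq0 k p : (forall i, (i < k)%N -> p`_i = 0) -> take_poly k p = 0.
Proof. by move=> p0; apply/polyP=> i; rewrite coef_take_poly coef0; case: ltnP => // /p0. Qed.

Lemma dvdp_XnP k p : reflect (forall i, (i < k)%N -> p`_i = 0) ('X^k %| p).
Proof.
apply: (iffP idP) => [/dvdpP[q ->] i ltik | /take_poly_eq0 pk0].
  by rewrite coefMXn ltik.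
by rewrite -(poly_take_drop k p) pk0 add0r dvdp_mull.
Qed.

Lemma deriv_dvdp_Xn k p : 'X^(k.+1) %| p -> 'X^k %| p^`().
Proof.
case/dvdpP=> q ->; rewrite derivM derivXn /=.
by rewrite mulrnAr -mulrnAl exprS mulrA -mulrDl dvdp_mull.
Qed.

Lemma dvdp_Xn_mul_cancel m d p q : (forall i, (i < d)%N -> p`_i = 0) -> p`_d != 0 ->
  'X^(m + d) %| q * p -> 'X^m %| q.
Proof.
move=> /take_poly_eq0 pd0; rewrite -(poly_take_drop d p) pd0 add0r.
set u := drop_poly d p; rewrite coefMXn ltnn subnn => u0.
rewrite mulrA exprD dvdp_mul2r ?monic_neq0 ?monicXn // Gauss_dvdpl //.
by apply: coprimep_expl; rewrite coprimep_sym coprimepX rootE horner_coef0.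
Qed.
End TruncatedSeries.

Section ExponentialGeneratingFunctions.
Variable R : numFieldType.

Lemma natr_fact_neq0 n : (n`!)%:R != 0 :> R.
Proof. by rewrite pnatr_eq0 -lt0n fact_gt0. Qed.

Definition egf (M : nat) (a : nat -> R) : {poly R} := \poly_(i < M) (a i / (i`!)%:R).

Definition exp_tail (N M : nat) : {poly R} := egf M (fun i => (N <= i)%:R).

Lemma deriv_egf M a : (egf M.+1 a)^`() = egf M (fun i => a i.+1).
Proof.
apply/polyP=> i; rewrite coef_deriv !coef_poly ltnS.
case: ltnP => _; last by rewrite mul0rn.
rewrite factS natrM -mulr_natr; field.
by rewrite natr_fact_neq0 nat1r pnatr_eq0.
Qed.

Lemma deriv_exp_tail N M : (exp_tail N.+1 M.+1)^`() = exp_tail N M.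
Proof. by rewrite deriv_egf. Qed.

Lemma exp_tail_recl N M : (N < M)%N ->
  exp_tail N M = (N`!)%:R^-1 *: 'X^N + exp_tail N.+1 M.
Proof.
move=> ltNM; apply/polyP=> i; rewrite coefD coefZ coefXn !coef_poly.
case: (ltnP i M) => [_|leMi].
  by case: ltngtP => [|_|->] /=; rewrite ?(mul0r, mulr0, mulr1, mul1r, add0r, addr0).
by rewrite (_ : i == N = false) ?mulr0 ?addr0 //; apply/eqP; lia.
Qed.

Lemma dvdp_egf_sub K M a : (M <= K)%N -> 'X^M %| egf K a - egf M a.
Proof.
move=> leMK; apply/dvdp_XnP=> i ltiM.
by rewrite coefB !coef_poly ltiM (leq_trans ltiM leMK) subrr.
Qed.

Lemma coef_egfM K L a b n : (n < K)%N -> (n < L)%N ->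
  (egf K a * egf L b)`_n =
  (\sum_(j < n.+1) 'C(n, j)%:R * a j * b (n - j)%N) / (n`!)%:R.
Proof.
move=> ltnK ltnL; rewrite coefM mulr_suml; apply: eq_bigr => -[j /=]; rewrite ltnS => lejn _.
rewrite !coef_poly (leq_ltn_trans _ ltnK) // (leq_ltn_trans (leq_subr _ _) ltnL).
rewrite -(bin_fact lejn) !natrM; field.
by rewrite !natr_fact_neq0 pnatr_eq0 -lt0n bin_gt0.
Qed.
End ExponentialGeneratingFunctions.

Arguments egf {R} M a.
Arguments exp_tail {R} N M.

Section HypergeometricBernoulli.
Variables (N : nat) (b : nat -> rat).
Hypothesis hb : hypB_gf N b.

Lemma hypB_gf_dvdp M : 'X^M %| egf M b * exp_tail N M - (N`!)%:R^-1 *: 'X^N.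
Proof.
apply/dvdp_XnP=> m ltmM; rewrite coefB coefM coefZ coefXn mulrC -hb.
apply/eqP; rewrite subr_eq0 [X in _ == X]big_mkcond; apply/eqP/eq_bigr => -[j /=].
rewrite ltnS => lejm _.
rewrite !coef_poly (leq_ltn_trans lejm ltmM) (leq_ltn_trans (leq_subr j m) ltmM).
by case: leqP; rewrite ?mul1r ?mul0r ?mulr0.
Qed.

Lemma hypB_gf_coef0 : b 0%N = 1.
Proof.
have := hb N; rewrite eqxx big_mkcond big_ord_recl big1 => [|k _] /=.
  rewrite subn0 leqnn addr0 fact0 divr1 => /divIf; apply; exact: natr_fact_neq0.
by rewrite ifN // -ltnNge /bump /= add1n; have := ltn_ord k; lia.
Qed.

Lemma hypB_gf_coef1 : b 1%N = - (N.+1%:R)^-1.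
Proof.
have := hb N.+1; rewrite gtn_eqF // mul0r big_mkcond !big_ord_recl big1 => [|k _] /=.
  rewrite /bump /= subn0 subSS subn0 leqnn leqnSn hypB_gf_coef0 addr0 fact0 factS.
  rewrite !addn0 !divr1 div1r natrM => /eqP; rewrite addr_eq0 => /eqP e.
  have f0 := natr_fact_neq0 rat N.
  rewrite -[b 1%N](divfK f0) -[b 1%N / _]opprK -e; field.
  by rewrite f0 nat1r pnatr_eq0.
by rewrite ifN // -ltnNge /bump /= !add1n; have := ltn_ord k; lia.
Qed.
End HypergeometricBernoulli.

Lemma hypB_gf_ode N (b c : nat -> rat) n : hypB_gf N b -> hypB_gf N.+1 c ->
  'X^n %| egf (n + N).+1 c + (egf (n + N).+1 c)^`()
          - (1 + (egf (n + N).+1 c)^`()) * egf (n + N) b.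
Proof.
move=> hb hc; case: n => [|n]; first by rewrite expr0 dvd1p.
set M := (n.+1 + N)%N; set A := egf M.+1 c; set G := egf M b.
pose Et : {poly rat} := exp_tail N.+1 M; pose X1 : {poly rat} := (N`!)%:R^-1 *: 'X^N.
have ltNM : (N < M)%N by rewrite /M; lia.
have E1_def : exp_tail N M = X1 + Et by rewrite exp_tail_recl.
have deriv_defA : 'X^M %| A^`() * exp_tail N.+1 M.+1 + A * (X1 + Et) - X1.
  move/deriv_dvdp_Xn: (hypB_gf_dvdp hc M.+1).
  rewrite derivB derivM deriv_exp_tail derivZ derivXn -E1_def /= -scaler_nat scalerA.
  by rewrite factS natrM invfM mulrAC mulVf ?pnatr_eq0 ?mul1r.
have Et_trunc : 'X^M %| exp_tail N.+1 M.+1 - Et := dvdp_egf_sub _ (leqnSn M).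
have defG : 'X^M %| G * (X1 + Et) - X1 by rewrite -E1_def; apply: hypB_gf_dvdp.
apply: (dvdp_Xn_mul_cancel (d := N) (p := exp_tail N M)) => [i ltiN||].
- by rewrite coef_poly (leqNgt N i) ltiN mul0r if_same.
- by rewrite coef_poly ltNM leqnn mul1r invr_eq0 natr_fact_neq0.
have -> : (A + A^`() - (1 + A^`()) * G) * exp_tail N M =
    (A^`() * exp_tail N.+1 M.+1 + A * (X1 + Et) - X1)
    - A^`() * (exp_tail N.+1 M.+1 - Et) - (1 + A^`()) * (G * (X1 + Et) - X1).
  by rewrite E1_def; ring.
by apply: dvdp_sub; [apply: dvdp_sub; last apply: dvdp_mull | apply: dvdp_mull].
Qed.

Lemma hypB_gf_conv N (b c : nat -> rat) : hypB_gf N b -> hypB_gf N.+1 c ->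
  forall n, c n + c n.+1 = b n + \sum_(j < n.+1) 'C(n, j)%:R * c j.+1 * b (n - j)%N.
Proof.
move=> hb hc n; move/dvdp_XnP/(_ n (ltnSn n)): (hypB_gf_ode n.+1 hb hc).
rewrite deriv_egf mulrDl mul1r !coefB coefD coefD coef_egfM; try lia.
rewrite !coef_poly !ifT; try lia.
rewrite -!mulrDl -!mulrBl => /eqP; rewrite mulf_eq0 invr_eq0 (negPf (natr_fact_neq0 _ _)) orbF.
by rewrite subr_eq0 => /eqP.
Qed.

Lemma hypB_gf_rec N (b c : nat -> rat) : hypB_gf N b -> hypB_gf N.+1 c ->
  forall n, c n * (N.+1 + n)%:R / N.+1%:R =
    b n + \sum_(i < n | (0 < i)%N) b (n - i + 1)%N * 'C(n, n - i + 1)%:R * c i.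
Proof.
move=> hb hc n; have := hypB_gf_conv hb hc n.
rewrite big_ord_recr /= subnn binn (hypB_gf_coef0 hb) mul1r mulr1 addrA => /addIr.
case: n => [|n]; first by rewrite !big_ord0 !addr0 addn0 => ->; rewrite mulfK ?pnatr_eq0.
rewrite big_ord_recr /= subSnn (hypB_gf_coef1 hb) binSn => e.
have -> : \sum_(i < n.+1 | (0 < i)%N) b (n.+1 - i + 1)%N * 'C(n.+1, n.+1 - i + 1)%:R * c i
        = \sum_(j < n) 'C(n.+1, j)%:R * c j.+1 * b (n.+1 - j)%N.
  rewrite big_mkcond big_ord_recl /= add0r; apply: eq_bigr => j _.
  have -> : (n.+1 - bump 0 j + 1 = n.+1 - j)%N by rewrite /bump /=; have := ltn_ord j; lia.
  by rewrite bin_sub ?(leq_trans (ltnW (ltn_ord j))) // /bump add1n [RHS]mulrC mulrA.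
rewrite addrA in e; rewrite -[_ + \sum_(j < n) _](addrK (n.+1%:R * c n.+1 * - N.+1%:R^-1)) -e.
by rewrite natrD; field; rewrite nat1r pnatr_eq0.
Qed.

Lemma big_tuple_cons (R : nmodType) (T : finType) m (F : m.+1.-tuple T -> R) :
  \sum_(t : m.+1.-tuple T) F t = \sum_(x : T) \sum_(t : m.-tuple T) F [tuple of x :: t].
Proof.
rewrite pair_big /= (reindex (fun p : T * m.-tuple T => [tuple of p.1 :: p.2])) /=.
  by apply: eq_bigr => -[x t] _.
exists (fun t => (thead t, [tuple of behead t])) => [[x t] _ | t _] /=.
  by congr pair; apply: val_inj.
by apply: val_inj; case: t => -[|x s].
Qed.

Section ChainSums.
Variable R : comRingType.
Variables (w : nat -> R) (g : nat -> nat -> R).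

Definition chain_weight (c : seq nat) (m : nat) : R :=
  w (nth 0%N c m) * \prod_(1 <= k < m.+1) g (nth 0%N c k.-1) (nth 0%N c k).

Definition chain_sum (L K n : nat) : R :=
  \sum_(m < L)
    \sum_(t : m.-tuple 'I_K |
          sorted (fun a b : nat => (b < a)%N) (n :: map val t)
          && all (fun i : 'I_K => (0 < val i)%N) t)
      chain_weight (n :: map val t) m.

Lemma chain_weight_cons n i s m :
  chain_weight [:: n, i & s] m.+1 = g n i * chain_weight (i :: s) m.
Proof.
rewrite /chain_weight big_nat_recl //= mulrCA; congr (_ * (_ * _)).
by apply: eq_big_nat => -[|k].
Qed.

Lemma chain_sum_rec L K n :
  chain_sum L.+1 K n = w n + \sum_(i < K | (0 < i < n)%N) g n i * chain_sum L K i.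
Proof.
rewrite /chain_sum big_ord_recl /=; congr (_ + _).
  rewrite (eq_bigl (pred1 [tuple])) => [|t]; last by rewrite [t]tuple0 /= eqxx.
  by rewrite big_pred1_eq /chain_weight big_geq // mulr1.
under [RHS]eq_bigr do rewrite mulr_sumr.
rewrite exchange_big /=; apply: eq_bigr => m _.
rewrite big_mkcond big_tuple_cons [RHS]big_mkcond /=; apply: eq_bigr => i _.
case: ifP => [/andP[i_gt0 i_lt_n] | i_out].
  rewrite mulr_sumr [RHS]big_mkcond; apply: eq_bigr => t _ /=.
  by rewrite i_gt0 i_lt_n /=; case: ifP; rewrite ?mulr0 // chain_weight_cons.
rewrite big1 // => t _ /=.
by case: ifP => // /andP[/andP[i_lt_n _] /andP[i_gt0 _]]; rewrite i_gt0 i_lt_n in i_out.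
Qed.

Lemma chain_sum_solution (v : nat -> R) :
    (forall n, (0 < n)%N -> v n = w n + \sum_(i < n | (0 < i)%N) g n i * v i) ->
  forall L K n, (0 < n <= L)%N -> (n <= K)%N -> chain_sum L K n = v n.
Proof.
move=> v_rec; elim=> [|L IH] K n /andP[n_gt0 le_nL] le_nK; first by case: n n_gt0 le_nL le_nK.
rewrite chain_sum_rec v_rec //.
rewrite (big_ord_widen_cond K (fun i => 0 < i)%N (fun i => g n i * v i)) //.
congr (_ + _).
apply: eq_bigr => i /andP[i_gt0 lt_in]; rewrite IH ?i_gt0 //=.
  exact: leq_trans lt_in le_nL.
exact: ltnW (leq_trans lt_in le_nK).
Qed.
End ChainSums.

Theorem proposition5 (B : nat -> nat -> rat)
  (hB : forall N : nat, (1 <= N)%N -> hypB_gf N (B N))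
  (N n : nat) (hN : (2 <= N)%N) (hn : (1 <= n)%N) :
  B N n =
  N%:R / (N + n)%:R *
  \sum_(m < n)
    \sum_(t : m.-tuple 'I_n |
          sorted (fun a b : nat => (b < a)%N) (n :: map val t)
          && all (fun i : 'I_n => (0 < val i)%N) t)
      (let c := n :: map val t in
       B (N.-1) (nth 0%N c m) *
       \prod_(1 <= k < m.+1)
         (B (N.-1) (nth 0%N c k.-1 - nth 0%N c k + 1)%N
          * ('C(nth 0%N c k.-1, nth 0%N c k.-1 - nth 0%N c k + 1))%:R
          * (N%:R / (N + nth 0%N c k)%:R))).
Proof.
case: N hN => [|N] // hN.
pose g a i := B N (a - i + 1)%N * 'C(a, a - i + 1)%:R * (N.+1%:R / (N.+1 + i)%:R).
pose v i := (N.+1 + i)%:R / N.+1%:R * B N.+1 i.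
have v_rec i : (0 < i)%N -> v i = B N i + \sum_(j < i | (0 < j)%N) g i j * v j.
  move=> _; rewrite /v mulrC mulrA (hypB_gf_rec (hB N hN) (hB N.+1 isT)).
  congr (_ + _); apply: eq_bigr => j _; rewrite /g; field.
  by rewrite nat1r -natrD !pnatr_eq0.
have -> : B N.+1 n = N.+1%:R / (N.+1 + n)%:R * v n.
  by rewrite /v mulrA; field; rewrite nat1r -natrD !pnatr_eq0.
by rewrite -(chain_sum_solution v_rec (L := n) (K := n)) ?hn ?leqnn.
Qed.
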